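(* Let $\Theta$ be a branch of a tableau of $\mathbf{TAB}_{\mathbf{IB}}$. Then $\Theta$ is infinite if and only if there is an infinite sequence of nominals $i_0\prec_\Theta i_1\prec_\Theta i_2\prec_\Theta\cdots$.
   Context: Hybrid language: fix disjoint countably infinite sets $\mathbf{Prop}$ (propositional variables) and $\mathbf{Nom}$ (nominals). Formulas: $\varphi ::= p \mid i \mid \neg\varphi \mid \varphi\land\varphi \mid \Diamond\varphi \mid @_i\varphi$ with $p\in\mathbf{Prop}$, $i\in\mathbf{Nom}$; $\Box\varphi$ abbreviates $\neg\Diamond\neg\varphi$. Tableau calculus $\mathbf{TAB}_{\mathbf{IB}}$. A tableau is a well-founded tree whose nodes are formulas of the form $@_i\varphi$; its root is a formula $@_i\varphi$ (the root formula) where $i$ does not occur in $\varphi$. A branch is a maximal path; $\varphi\in\Theta$ means $\varphi$ occurs on branch $\Theta$. Each branch is extended by applying the rules below to its formulas as often as possible, except that no further formula is added to a branch once either (i) every new formula generated by applying any rule already occurs on the branch, or (ii) the branch is closed, i.e. contains $@_i\varphi$ and $@_i\neg\varphi$ for some formula $\varphi$ and nominal $i$. An accessibility formula is a formula $@_i\Diamond j$ added by rule $[\Diamond]$ (with $j$ the new nominal). Rules (premises already on the branch; conclusions added to it): [$\neg\neg$] from $@_i\neg\neg\varphi$ add $@_i\varphi$; [$\land$] from $@_i(\varphi\land\psi)$ add $@_i\varphi$ and $@_i\psi$; [$\neg\land$] from $@_i\neg(\varphi\land\psi)$ split the branch into one extended by $@_i\neg\varphi$ and one extended by $@_i\neg\psi$;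 [$\Diamond$] from $@_i\Diamond\varphi$, which is not an accessibility formula, add $@_i\Diamond j$ and $@_j\varphi$ where $j$ is a nominal not occurring on the branch; this rule is applied at most once per formula, and only if $i$ is a quasi-urfather on the branch (defined below); [$\neg\Diamond$] from $@_i\neg\Diamond\varphi$ and $@_i\Diamond j$ add $@_j\neg\varphi$; [$\Box_{sym}$] from $@_i\Box\varphi$ and $@_j\Diamond i$ add $@_j\varphi$; [$@$] from $@_i@_j\varphi$ add $@_j\varphi$; [$\neg@$] from $@_i\neg@_j\varphi$ add $@_j\neg\varphi$; [$Id$] from $@_i\varphi$, which is not an accessibility formula, and $@_i j$ add $@_j\varphi$; [$Ref$] for any nominal $i$ occurring on the branch add $@_i i$; ($\mathcal{I}$) for any nominal $i$ occurring on the branch add $@_i\neg\Diamond i$. Auxiliary notions for a branch $\Theta$. $@_i\varphi$ is a quasi-subformula of $@_j\psi$ if $\varphi$ is a subformula of $\psi$, or $\varphi=\neg\chi$ with $\chi$ a subformula of $\psi$. For a nominal $i$ occurring in $\Theta$, $T^\Theta(i)=\{\varphi \mid @_i\varphi\in\Theta$ and $@_i\varphi$ is a quasi-subformula of the root formula$\}$. Nominals $i,j$ are twins if $T^\Theta(i)=T^\Theta(j)$. $i\prec_\Theta j$ if $j$ was introduced by applying $[\Diamond]$ to a formula $@_i\Diamond\varphi$ (equivalently, the accessibility formula $@_i\Diamond j$ is in $\Theta$); $\prec_\Theta^*$ is its reflexive transitive closure. A nominal $i$ is a quasi-urfather on $\Theta$ if there are no twins $j\neq k$ with $j\prec_\Theta^*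 i$ and $k\prec_\Theta^* i$. *)

From Stdlib Require Import List Arith Relations.
Import ListNotations.

(* Prop = nat (via FProp), Nom = nat (via FNom): disjoint countably infinite sets. *)
Inductive form : Type :=
| FProp (p : nat)
| FNom (i : nat)
| FNeg (f : form)
| FAnd (f g : form)
| FDia (f : form)
| FAt (i : nat) (f : form).

Definition FBox (f : form) : form := FNeg (FDia (FNeg f)).

Inductive subf : form -> form -> Prop :=
| subf_refl f : subf f f
| subf_neg f g : subf f g -> subf f (FNeg g)
| subf_andl f g h : subf f g -> subf f (FAnd g h)
| subf_andr f g h : subf f h -> subf f (FAnd g h)
| subf_dia f g : subf f g -> subf f (FDia g)
| subf_at f i g : subf f g -> subf f (FAt i g).

Definition qsub (f g : form) : Prop :=
  subf f g \/ exists h, f = FNeg h /\ subf h g.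

Inductive nom_in (i : nat) : form -> Prop :=
| ni_nom : nom_in i (FNom i)
| ni_neg f : nom_in i f -> nom_in i (FNeg f)
| ni_andl f g : nom_in i f -> nom_in i (FAnd f g)
| ni_andr f g : nom_in i g -> nom_in i (FAnd f g)
| ni_dia f : nom_in i f -> nom_in i (FDia f)
| ni_at_here f : nom_in i (FAt i f)
| ni_at f j : nom_in i f -> nom_in i (FAt j f).

(* A node of a branch: the formula @_(nnom) (nfrm).  [nsrc = Some f] records
   that the node is an accessibility formula @_i<>j added by rule [<>]
   applied to @_i<>f;  [nsrc = None] for all other nodes. *)
Record node : Type := mkN { nnom : nat; nfrm : form; nsrc : option form }.

Definition lf_in (Th : list node) (i : nat) (f : form) : Prop :=
  exists s, In (mkN i f s) Th.

Definition lf_nacc (Th : list node) (i : nat) (f : form) : Prop :=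
  In (mkN i f None) Th.

Definition nom_on (Th : list node) (i : nat) : Prop :=
  exists x, In x Th /\ (nnom x = i \/ nom_in i (nfrm x)).

Definition closed (Th : list node) : Prop :=
  exists i f, lf_in Th i f /\ lf_in Th i (FNeg f).

Definition prec (Th : list node) (i j : nat) : Prop :=
  exists f, In (mkN i (FDia (FNom j)) (Some f)) Th.

(* T^Th(i), relative to the root formula @_{i0} f0 (only f0 matters) *)
Definition Tset (f0 : form) (Th : list node) (i : nat) (f : form) : Prop :=
  lf_in Th i f /\ qsub f f0.

Definition twins (f0 : form) (Th : list node) (j k : nat) : Prop :=
  forall f, Tset f0 Th j f <-> Tset f0 Th k f.

Definition quasi_urfather (f0 : form) (Th : list node) (i : nat) : Prop :=
  ~ exists j k, j <> k /\ twins f0 Th j k /\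
      clos_refl_trans nat (prec Th) j i /\ clos_refl_trans nat (prec Th) k i.

(* A rule instance is
   given by its list of alternatives (one alternative for a non-branching
   rule, two for [~/\]); each alternative is the list of its conclusions
   @_i f, written as pairs (i, f). *)
Inductive ord_rule (Th : list node) : list (list (nat * form)) -> Prop :=
| r_negneg i f : lf_in Th i (FNeg (FNeg f)) -> ord_rule Th [[(i, f)]]
| r_and i f g : lf_in Th i (FAnd f g) -> ord_rule Th [[(i, f); (i, g)]]
| r_negand i f g : lf_in Th i (FNeg (FAnd f g)) ->
    ord_rule Th [[(i, FNeg f)]; [(i, FNeg g)]]
| r_negdia i j f : lf_in Th i (FNeg (FDia f)) -> lf_in Th i (FDia (FNom j)) ->
    ord_rule Th [[(j, FNeg f)]]
| r_boxsym i j f : lf_in Th i (FBox f) -> lf_in Th j (FDia (FNom i)) ->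
    ord_rule Th [[(j, f)]]
| r_at i j f : lf_in Th i (FAt j f) -> ord_rule Th [[(j, f)]]
| r_negat i j f : lf_in Th i (FNeg (FAt j f)) -> ord_rule Th [[(j, FNeg f)]]
| r_id i j f : lf_nacc Th i f -> lf_in Th i (FNom j) -> ord_rule Th [[(j, f)]]
| r_ref i : nom_on Th i -> ord_rule Th [[(i, FNom i)]]
| r_irr i : nom_on Th i -> ord_rule Th [[(i, FNeg (FDia (FNom i)))]].

Definition rule_sat (Th : list node) (alts : list (list (nat * form))) : Prop :=
  exists alt, In alt alts /\ forall p, In p alt -> lf_in Th (fst p) (snd p).

Definition ord_pending (Th : list node) alts : Prop :=
  ord_rule Th alts /\ ~ rule_sat Th alts.

Definition dia_applied (Th : list node) (i : nat) (f : form) : Prop :=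
  exists j, In (mkN i (FDia (FNom j)) (Some f)) Th.

Definition dia_pending (f0 : form) (Th : list node) (i : nat) (f : form) : Prop :=
  lf_nacc Th i (FDia f) /\ ~ dia_applied Th i f /\ quasi_urfather f0 Th i.

Definition saturated (f0 : form) (Th : list node) : Prop :=
  (forall alts, ~ ord_pending Th alts) /\ (forall i f, ~ dia_pending f0 Th i f).

Definition tab_step (f0 : form) (Th : list node) (S : list node) : Prop :=
  (exists alts alt, ord_pending Th alts /\ In alt alts /\ NoDup S /\
     forall x, In x S <->
       (nsrc x = None /\ In (nnom x, nfrm x) alt /\ ~ lf_in Th (nnom x) (nfrm x)))
  \/
  (exists i f j, dia_pending f0 Th i f /\ ~ nom_on Th j /\
     S = [mkN i (FDia (FNom j)) (Some f); mkN j f None]).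

(* A branch is presented as the sequence of its expansion steps:
   [th n = Some S] means that at stage n the nodes S were appended;
   [th n = None] means the branch has stopped.  Stage 0 is the root. *)
Fixpoint pre (th : nat -> option (list node)) (n : nat) : list node :=
  match n with
  | 0 => []
  | S m => pre th m ++ match th m with Some l => l | None => [] end
  end.

Definition IsBranch (i0 : nat) (f0 : form) (th : nat -> option (list node)) : Prop :=
  th 0 = Some [mkN i0 f0 None] /\ ~ nom_in i0 f0 /\
  (forall n, th n = None -> th (S n) = None) /\
  (forall n S, 0 < n -> th n = Some S -> ~ closed (pre th n) /\ tab_step f0 (pre th n) S) /\
  (forall n S, th n = Some S -> th (Datatypes.S n) = None ->
     closed (pre th (Datatypes.S n)) \/ saturated f0 (pre th (Datatypes.S n))) /\
  (* rules are applied as often as possible: no rule instance stays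
     applicable-but-unapplied forever *)
  (forall alts n, ~ (forall m, n <= m -> th m <> None /\ ord_pending (pre th m) alts)) /\
  (forall i f n, ~ (forall m, n <= m -> th m <> None /\ dia_pending f0 (pre th m) i f)).

Definition branch_infinite (th : nat -> option (list node)) : Prop :=
  forall N, exists n, N <= length (pre th n).

Definition branch_prec (th : nat -> option (list node)) (i j : nat) : Prop :=
  exists n, prec (pre th n) i j.

(* If the branch has an infinite chain i_0 ≺ i_1 ≺ ..., the accessibility formula
   @_{i_k}◇i_{k+1} is added together with the fresh nominal i_{k+1}, so the stages
   introducing successive links strictly increase: the branch never stops, and every
   stage adds a node.

   Conversely, every node of the branch is, up to its nominals, built from a
   quasi-subformula of the root, and nodes are never repeated; so if the nominals of
   the branch were bounded the branch would be finite.  Every nominal descends along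
   ≺ from a nominal of the root, and a nominal has at most one ≺-successor per
   ◇-subformula of the root (rule [◇] fires once per formula).  König's lemma then
   yields an infinite ≺-chain. *)

From Stdlib Require Import List Arith Relations Lia Classical ClassicalEpsilon.
Import ListNotations.

Lemma subf_trans f g h : subf f g -> subf g h -> subf f h.
Proof. intros Hfg Hgh; induction Hgh; eauto using subf. Qed.

Lemma nom_in_subf j f g : subf f g -> nom_in j f -> nom_in j g.
Proof. induction 1; eauto using nom_in. Qed.

Lemma qsub_neg f g : qsub (FNeg f) g -> subf f g.
Proof.
  intros [H | (h & E & H)].
  - apply (subf_trans f (FNeg f)); eauto using subf.
  - injection E as ->; exact H.
Qed.

Fixpoint subformulas (f : form) : list form :=
  f :: match f with
       | FNeg g | FDia g | FAt _ g => subformulas g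
       | FAnd g h => subformulas g ++ subformulas h
       | FProp _ | FNom _ => []
       end.

Lemma subformulas_complete g f : subf g f -> In g (subformulas f).
Proof. induction 1; destruct f; simpl; auto using in_or_app. Qed.

Fixpoint nominals (f : form) : list nat :=
  match f with
  | FProp _ => []
  | FNom i => [i]
  | FNeg g | FDia g => nominals g
  | FAnd g h => nominals g ++ nominals h
  | FAt i g => i :: nominals g
  end.

Lemma nominals_complete j f : nom_in j f -> In j (nominals f).
Proof. induction 1; simpl; auto using in_or_app. Qed.

Definition unbounded (P : nat -> Prop) : Prop := forall B, exists j, B <= j /\ P j.

Lemma unbounded_pigeonhole {A : Type} (L : list A) (R : A -> nat -> Prop) :
  unbounded (fun j => exists r, In r L /\ R r j) -> exists r, In r L /\ unbounded (R r).
Proof.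
  induction L as [|a L IH]; intros H.
  - destruct (H 0) as (j & _ & r & [] & _).
  - destruct (classic (unbounded (fun j => exists r, In r L /\ R r j))) as [HL | HL].
    + destruct (IH HL) as (r & Hr & Hu). exists r. split; [right|]; assumption.
    + apply not_all_ex_not in HL as [B1 HB1].
      exists a. split; [left; reflexivity|]. intros B.
      destruct (H (max B B1)) as (j & Hj & r & [<- | Hr] & HR).
      * exists j. split; [lia | exact HR].
      * exfalso. apply HB1. exists j. split; [lia | eauto].
Qed.

Lemma finite_image {A : Type} (D : list A) (P : A -> nat -> Prop) :
  (forall a c c', P a c -> P a c' -> c = c') ->
  exists cs, forall a c, In a D -> P a c -> In c cs.
Proof.
  intros Hfun. induction D as [|a D [cs Hcs]].
  - exists []. intros a c [].
  - destruct (classic (exists c, P a c)) as [[c0 Hc0] | Hno].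
    + exists (c0 :: cs). intros b c [<- | Hb] Hc.
      * left. exact (Hfun _ _ _ Hc0 Hc).
      * right. eauto.
    + exists cs. intros b c [<- | Hb] Hc; [exfalso; eauto | eauto].
Qed.

Lemma rt_first_step {A : Type} (R : relation A) x y :
  clos_refl_trans A R x y -> x <> y -> exists z, R x z /\ clos_refl_trans A R z y.
Proof.
  intros Hxy Hne. apply clos_rt_rt1n in Hxy.
  destruct Hxy as [|z w Hxz Hzw]; [congruence|].
  exists z. split; [exact Hxz | apply clos_rt1n_rt; exact Hzw].
Qed.

Lemma serial_chain {A : Type} (R : relation A) (Q : A -> Prop) a :
  Q a -> (forall x, Q x -> exists y, R x y /\ Q y) ->
  exists s : nat -> A, forall k, R (s k) (s (S k)).
Proof.
  intros Ha Hser.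
  assert (next : forall x : {x | Q x}, {y : {y | Q y} | R (proj1_sig x) (proj1_sig y)}).
  { intros [x Hx]. destruct (constructive_indefinite_description _ (Hser x Hx)) as [y [Hxy Hy]].
    exists (exist _ y Hy). exact Hxy. }
  exists (fun k => proj1_sig (Nat.iter k (fun x => proj1_sig (next x)) (exist _ a Ha))).
  intros k. exact (proj2_sig (next _)).
Qed.

Lemma pre_succ th n :
  pre th (S n) = pre th n ++ match th n with Some l => l | None => [] end.
Proof. reflexivity. Qed.

Lemma pre_mono th m n : m <= n -> incl (pre th m) (pre th n).
Proof.
  induction 1; [apply incl_refl|].
  rewrite pre_succ. apply incl_appl. assumption.
Qed.

Lemma in_pre_inv th n x : In x (pre th n) -> exists m L, th m = Some L /\ In x L.
Proof.
  induction n as [|n IH]; [intros []|].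
  rewrite pre_succ. intros [Hx | Hx]%in_app_or; [auto|].
  destruct (th n) as [L|] eqn:E; [eauto | destruct Hx].
Qed.

Lemma in_pre_stage th m L x : th m = Some L -> In x L -> In x (pre th (S m)).
Proof. intros E Hx. rewrite pre_succ, E. apply in_or_app; auto. Qed.

Lemma nom_on_incl Th Th' j : incl Th Th' -> nom_on Th j -> nom_on Th' j.
Proof. intros Hincl (x & Hx & Hj). exists x. auto. Qed.

Lemma nom_on_index Th i g : lf_in Th i g -> nom_on Th i.
Proof. intros [s Hs]. exists (mkN i g s). simpl. auto. Qed.

Lemma nom_on_formula Th i g h j : lf_in Th i g -> subf h g -> nom_in j h -> nom_on Th j.
Proof. intros [s Hs] Hhg Hj. exists (mkN i g s). simpl. eauto using nom_in_subf. Qed.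

Lemma lf_nacc_in Th i g : lf_nacc Th i g -> lf_in Th i g.
Proof. intros H. exists None. exact H. Qed.

Lemma ord_conclusion_nominals Th alts alt i g j :
  ord_rule Th alts -> In alt alts -> In (i, g) alt -> i = j \/ nom_in j g -> nom_on Th j.
Proof.
  intros Hr Ha Hp Hj.
  destruct Hr; simpl in Ha; repeat destruct Ha as [<- | Ha]; try contradiction;
    simpl in Hp; repeat destruct Hp as [Hp | Hp]; try contradiction;
    injection Hp as <- <-; destruct Hj as [<- | Hj];
    repeat match goal with
           | H : nom_in _ (FNeg _) |- _ => inversion H; subst; clear H
           | H : nom_in _ (FDia _) |- _ => inversion H; subst; clear H
           | H : nom_in _ (FNom _) |- _ => inversion H; subst; clear H
           end;
    eauto 7 using nom_on_index, nom_on_formula, lf_nacc_in, subf, nom_in.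
Qed.

(* The formulas @_i i and @_i¬◇i of (Ref) and (I), and the ¬j and ¬◇j that [¬◇] and [Id]
   derive from them. *)
Definition nominal_form (g : form) : Prop :=
  exists k, g = FNom k \/ g = FNeg (FNom k) \/ g = FNeg (FDia (FNom k)).

Definition admissible_form (f0 g : form) : Prop := qsub g f0 \/ nominal_form g.

Definition admissible_node (f0 : form) (x : node) : Prop :=
  match nsrc x with
  | None => admissible_form f0 (nfrm x)
  | Some f => subf (FDia f) f0 /\ exists k, nfrm x = FDia (FNom k)
  end.

Section Admissible.
Variables (f0 : form) (Th : list node).
Hypothesis Hadm : forall x, In x Th -> admissible_node f0 x.

Lemma premise_neg i g : lf_in Th i (FNeg g) ->
  subf g f0 \/ exists k, g = FNom k \/ g = FDia (FNom k).
Proof.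
  intros [[f|] Hs]; apply Hadm in Hs; simpl in Hs.
  - destruct Hs as [_ [k E]]. discriminate.
  - destruct Hs as [Hq | (k & [E | [E | E]])].
    + left. apply qsub_neg. exact Hq.
    + discriminate.
    + injection E as ->. eauto.
    + injection E as ->. eauto.
Qed.

Lemma premise_compound i g : lf_in Th i g ->
  (forall h, g <> FNeg h) -> (forall k, g <> FNom k) -> (forall h, g <> FDia h) -> subf g f0.
Proof.
  intros [[f|] Hs] Hneg Hnom Hdia; apply Hadm in Hs; simpl in Hs.
  - destruct Hs as [_ [k E]]. exfalso. eapply Hdia; exact E.
  - destruct Hs as [[Hs | (h & E & _)] | (k & [E | [E | E]])];
      [exact Hs | exfalso; eapply Hneg; exact E | exfalso; eapply Hnom; exact E
      | exfalso; eapply Hneg; exact E | exfalso; eapply Hneg; exact E].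
Qed.

Lemma ord_conclusion_admissible alts alt i g :
  ord_rule Th alts -> In alt alts -> In (i, g) alt -> admissible_form f0 g.
Proof.
  intros Hr Ha Hp.
  assert (Hsub : forall h, subf h f0 -> admissible_form f0 h) by (left; left; assumption).
  assert (Hnegsub : forall h, subf h f0 -> admissible_form f0 (FNeg h)) by (left; right; eauto).
  assert (Hnom : forall h, nominal_form h -> admissible_form f0 h) by (right; assumption).
  destruct Hr as [i' f H | i' f h H | i' f h H | i' j f H H' | i' j f H H'
                 | i' j f H | i' j f H | i' j f H H' | i' H | i' H];
    simpl in Ha; repeat destruct Ha as [<- | Ha]; try contradiction;
    simpl in Hp; repeat destruct Hp as [Hp | Hp]; try contradiction;
    injection Hp as <- <-.
  - destruct (premise_neg _ _ H) as [Hs | (k & [E | E])]; try discriminate.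
    apply Hsub, (subf_trans _ (FNeg f)); eauto using subf.
  - apply Hsub, (subf_trans _ (FAnd f h)); [eauto using subf|].
    eapply premise_compound; [exact H | intros; discriminate ..].
  - apply Hsub, (subf_trans _ (FAnd f h)); [eauto using subf|].
    eapply premise_compound; [exact H | intros; discriminate ..].
  - destruct (premise_neg _ _ H) as [Hs | (k & [E | E])]; try discriminate.
    apply Hnegsub, (subf_trans _ (FAnd f h)); eauto using subf.
  - destruct (premise_neg _ _ H) as [Hs | (k & [E | E])]; try discriminate.
    apply Hnegsub, (subf_trans _ (FAnd f h)); eauto using subf.
  - destruct (premise_neg _ _ H) as [Hs | (k & [E | E])]; try discriminate.
    + apply Hnegsub, (subf_trans _ (FDia f)); eauto using subf.
    + injection E as ->. apply Hnom. exists k. auto.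
  - destruct (premise_neg _ _ H) as [Hs | (k & [E | E])]; try discriminate.
    apply Hsub, (subf_trans _ (FDia (FNeg f))); eauto using subf.
  - apply Hsub, (subf_trans _ (FAt j f)); [eauto using subf|].
    eapply premise_compound; [exact H | intros; discriminate ..].
  - destruct (premise_neg _ _ H) as [Hs | (k & [E | E])]; try discriminate.
    apply Hnegsub, (subf_trans _ (FAt j f)); eauto using subf.
  - exact (Hadm _ H).
  - apply Hnom. exists i'. auto.
  - apply Hnom. exists i'. auto.
Qed.

End Admissible.

Definition nominal_forms (B : nat) : list form :=
  flat_map (fun k => [FNom k; FNeg (FNom k); FNeg (FDia (FNom k)); FDia (FNom k)]) (seq 0 B).

Definition candidate_forms (f0 : form) (B : nat) : list form :=
  subformulas f0 ++ map FNeg (subformulas f0) ++ nominal_forms B.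

Definition candidate_nodes (f0 : form) (B : nat) : list node :=
  flat_map (fun i => flat_map (fun g => map (mkN i g) (None :: map Some (subformulas f0)))
                              (candidate_forms f0 B))
           (seq 0 B).

Lemma in_nominal_forms B k g : k < B ->
  In g [FNom k; FNeg (FNom k); FNeg (FDia (FNom k)); FDia (FNom k)] -> In g (nominal_forms B).
Proof. intros Hk Hg. apply in_flat_map. exists k. rewrite in_seq. split; [lia | exact Hg]. Qed.

Lemma admissible_candidate f0 B i g s : admissible_node f0 (mkN i g s) ->
  i < B -> (forall k, nom_in k g -> k < B) -> In (mkN i g s) (candidate_nodes f0 B).
Proof.
  intros Hadm Hi Hk.
  assert (Hg : In g (candidate_forms f0 B)).
  { unfold candidate_forms. rewrite !in_app_iff, in_map_iff.
    destruct s as [f|]; cbn in Hadm.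
    - destruct Hadm as [_ [k ->]]. right; right.
      apply in_nominal_forms with k; [apply Hk; eauto using nom_in | simpl; tauto].
    - destruct Hadm as [[Hq | (h & -> & Hq)] | (k & [-> | [-> | ->]])].
      + left. apply subformulas_complete. exact Hq.
      + right; left. exists h. split; [reflexivity | apply subformulas_complete; exact Hq].
      + right; right. apply in_nominal_forms with k; [apply Hk; eauto using nom_in | simpl; tauto].
      + right; right. apply in_nominal_forms with k; [apply Hk; eauto using nom_in | simpl; tauto].
      + right; right. apply in_nominal_forms with k; [apply Hk; eauto using nom_in | simpl; tauto]. }
  assert (Hs : In s (None :: map Some (subformulas f0))).
  { destruct s as [f|]; [right | left; reflexivity].
    apply in_map, subformulas_complete. destruct Hadm as [Hf _].
    apply (subf_trans _ (FDia f)); eauto using subf. }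
  apply in_flat_map. exists i. rewrite in_seq. split; [lia|].
  apply in_flat_map. exists g. split; [exact Hg | apply in_map; exact Hs].
Qed.

Definition desc (th : nat -> option (list node)) : relation nat :=
  clos_refl_trans nat (branch_prec th).

Section Branch.
Variables (i0 : nat) (f0 : form) (th : nat -> option (list node)).
Hypothesis HB : IsBranch i0 f0 th.

Lemma stage_cases m L : th m = Some L ->
  (m = 0 /\ L = [mkN i0 f0 None]) \/ tab_step f0 (pre th m) L.
Proof.
  destruct HB as (H0 & _ & _ & Hstep & _). intros E.
  destruct m as [|m].
  - left. rewrite H0 in E. injection E as <-. auto.
  - right. apply (Hstep (S m) L); [lia | exact E].
Qed.

Lemma stopped_forever n m : th n = None -> n <= m -> th m = None.
Proof. destruct HB as (_ & _ & Hstop & _). intros E. induction 1; auto. Qed.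

Lemma acc_stage i j f n : In (mkN i (FDia (FNom j)) (Some f)) (pre th n) ->
  exists m, th m = Some [mkN i (FDia (FNom j)) (Some f); mkN j f None] /\
    dia_pending f0 (pre th m) i f /\ ~ nom_on (pre th m) j.
Proof.
  intros Hin. destruct (in_pre_inv _ _ _ Hin) as (m & L & E & Hx).
  exists m. destruct (stage_cases m L E) as [[_ ->] | [Hord | Hdia]].
  - destruct Hx as [Hx | []]. discriminate.
  - destruct Hord as (alts & alt & _ & _ & _ & Hiff).
    apply Hiff in Hx as [Hx _]. discriminate.
  - destruct Hdia as (i' & f' & j' & Hp & Hfresh & ->).
    destruct Hx as [Hx | [Hx | []]]; [|discriminate].
    injection Hx as <- <- <-. auto.
Qed.

Lemma acc_target_unique i j j' f n n' :
  In (mkN i (FDia (FNom j)) (Some f)) (pre th n) ->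
  In (mkN i (FDia (FNom j')) (Some f)) (pre th n') -> j = j'.
Proof.
  intros Hn Hn'.
  destruct (acc_stage _ _ _ _ Hn) as (m & Hm & (_ & Hna & _) & _).
  destruct (acc_stage _ _ _ _ Hn') as (m' & Hm' & (_ & Hna' & _) & _).
  destruct (lt_eq_lt_dec m m') as [[Hlt | <-] | Hlt].
  - exfalso. apply Hna'. exists j. apply (pre_mono th (S m)); [lia|].
    eapply in_pre_stage; [exact Hm | left; reflexivity].
  - rewrite Hm in Hm'. injection Hm' as E. exact E.
  - exfalso. apply Hna. exists j'. apply (pre_mono th (S m')); [lia|].
    eapply in_pre_stage; [exact Hm' | left; reflexivity].
Qed.

Lemma branch_admissible n x : In x (pre th n) -> admissible_node f0 x.
Proof.
  revert x. induction n as [|n IH]; intros x; [intros []|].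
  rewrite pre_succ. intros [Hx | Hx]%in_app_or; [auto|].
  destruct (th n) as [L|] eqn:E; [|destruct Hx].
  destruct (stage_cases n L E) as [[_ ->] | [Hord | Hdia]].
  - destruct Hx as [<- | []]. left. left. apply subf_refl.
  - destruct Hord as (alts & alt & [Hr _] & Ha & _ & Hiff).
    destruct x as [i g s]. apply Hiff in Hx as (Hs & Hp & _). simpl in *. subst s.
    exact (ord_conclusion_admissible _ _ IH _ _ _ _ Hr Ha Hp).
  - destruct Hdia as (i & f & j & (Hprem & _ & _) & _ & ->).
    assert (Hf : subf (FDia f) f0).
    { destruct (IH _ Hprem) as [[Hf | (h & E' & _)] | (k & [E' | [E' | E']])];
        [exact Hf | discriminate ..]. }
    destruct Hx as [<- | [<- | []]].
    + split; [exact Hf | exists j; reflexivity].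
    + left. left. apply (subf_trans _ (FDia f)); eauto using subf.
Qed.

Lemma pre_NoDup n : NoDup (pre th n).
Proof.
  induction n as [|n IH]; [constructor|].
  rewrite pre_succ. destruct (th n) as [L|] eqn:E; [|rewrite app_nil_r; exact IH].
  destruct (stage_cases n L E) as [[-> ->] | [Hord | Hdia]].
  - repeat constructor. intros [].
  - destruct Hord as (alts & alt & _ & _ & Hnd & Hiff).
    apply NoDup_app; [exact IH | exact Hnd|].
    intros [i g s] Hx Hx'. apply Hiff in Hx' as (_ & _ & Hnew). apply Hnew. exists s. exact Hx.
  - destruct Hdia as (i & f & j & _ & Hfresh & ->).
    apply NoDup_app; [exact IH | repeat constructor; simpl; intuition discriminate |].
    intros x Hx Hnew. apply Hfresh. exists x. split; [exact Hx|].
    destruct Hnew as [<- | [<- | []]]; simpl; eauto using nom_in.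
Qed.

Lemma nominal_from_root n j : nom_on (pre th n) j ->
  exists r, In r (i0 :: nominals f0) /\ desc th r j.
Proof.
  revert j. induction n as [|n IH]; intros j; [intros (x & [] & _)|].
  intros (x & Hx & Hj). rewrite pre_succ in Hx. apply in_app_or in Hx as [Hx | Hx].
  { apply IH. exists x. auto. }
  destruct (th n) as [L|] eqn:E; [|destruct Hx].
  destruct (stage_cases n L E) as [[_ ->] | [Hord | Hdia]].
  - destruct Hx as [<- | []]. exists j. split; [|apply rt_refl].
    destruct Hj as [<- | Hj]; [left; reflexivity | right; apply nominals_complete; exact Hj].
  - destruct Hord as (alts & alt & [Hr _] & Ha & _ & Hiff).
    destruct x as [i g s]. apply Hiff in Hx as (_ & Hp & _).
    apply IH. exact (ord_conclusion_nominals _ _ _ _ _ _ Hr Ha Hp Hj).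
  - destruct Hdia as (i & f & c & (Hprem & _ & _) & _ & ->).
    assert (Hc : exists r, In r (i0 :: nominals f0) /\ desc th r c).
    { destruct (IH i) as (r & Hr & Hri); [exists (mkN i (FDia f) None); simpl; auto|].
      exists r. split; [exact Hr|]. apply (rt_trans _ _ _ i); [exact Hri|].
      apply rt_step. exists (S n), f. eapply in_pre_stage; [exact E | left; reflexivity]. }
    destruct Hx as [<- | [<- | []]]; simpl in Hj.
    + destruct Hj as [<- | Hj].
      * apply IH. exists (mkN i (FDia f) None). simpl. auto.
      * inversion Hj as [| | | | f' Hj' | |]; subst. inversion Hj'; subst. exact Hc.
    + destruct Hj as [<- | Hj]; [exact Hc|].
      apply IH. exists (mkN i (FDia f) None). simpl. eauto using nom_in.
Qed.


Lemma successors_finite i : exists cs, forall c, branch_prec th i c -> In c cs.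
Proof.
  destruct (finite_image (subformulas f0)
              (fun f c => exists n, In (mkN i (FDia (FNom c)) (Some f)) (pre th n)))
    as [cs Hcs].
  { intros f c c' [n Hn] [n' Hn']. exact (acc_target_unique _ _ _ _ _ _ Hn Hn'). }
  exists cs. intros c (n & f & Hn). apply (Hcs f); [|eauto].
  destruct (branch_admissible _ _ Hn) as [Hf _].
  apply subformulas_complete, (subf_trans _ (FDia f)); eauto using subf.
Qed.

Lemma unbounded_desc_step i : unbounded (desc th i) ->
  exists c, branch_prec th i c /\ unbounded (desc th c).
Proof.
  intros Hi. destruct (successors_finite i) as [cs Hcs].
  destruct (unbounded_pigeonhole cs (fun c j => branch_prec th i c /\ desc th c j))
    as (c & _ & Hc).
  - intros B. destruct (Hi (max B (S i))) as (j & Hj & Hij).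
    destruct (rt_first_step _ _ _ Hij) as (c & Hic & Hcj); [lia|].
    exists j. split; [lia|]. exists c. auto.
  - exists c. split.
    + destruct (Hc 0) as (j & _ & Hic & _). exact Hic.
    + intros B. destruct (Hc B) as (j & Hj & _ & Hcj). eauto.
Qed.

Lemma bounded_nominals_length B : (forall n j, nom_on (pre th n) j -> j < B) ->
  forall n, length (pre th n) <= length (candidate_nodes f0 B).
Proof.
  intros Hb n. apply NoDup_incl_length; [apply pre_NoDup|].
  intros [i g s] Hx. apply admissible_candidate.
  - exact (branch_admissible _ _ Hx).
  - apply (Hb n). exists (mkN i g s). simpl. auto.
  - intros k Hk. apply (Hb n). exists (mkN i g s). simpl. auto.
Qed.

Lemma infinite_unbounded_nominals : branch_infinite th ->
  unbounded (fun j => exists n, nom_on (pre th n) j).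
Proof.
  intros Hinf B. apply NNPP. intros Hno.
  assert (Hb : forall n j, nom_on (pre th n) j -> j < B).
  { intros n j Hj. apply Nat.nle_gt. intros HBj. apply Hno. eauto. }
  destruct (Hinf (S (length (candidate_nodes f0 B)))) as [n Hn].
  pose proof (bounded_nominals_length B Hb n). lia.
Qed.

Lemma branch_infinite_chain : branch_infinite th ->
  exists s : nat -> nat, forall k, branch_prec th (s k) (s (S k)).
Proof.
  intros Hinf.
  destruct (unbounded_pigeonhole (i0 :: nominals f0) (desc th)) as (r & _ & Hr).
  { intros B. destruct (infinite_unbounded_nominals Hinf B) as (j & Hj & n & Hon).
    exists j. split; [exact Hj | exact (nominal_from_root _ _ Hon)]. }
  exact (serial_chain _ _ r Hr unbounded_desc_step).
Qed.

Lemma stage_nonempty m L : th m = Some L -> L <> [].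
Proof.
  intros E ->. destruct (stage_cases m [] E) as [[_ E'] | [Hord | Hdia]].
  - discriminate.
  - destruct Hord as (alts & alt & [_ Hunsat] & Ha & _ & Hiff).
    apply Hunsat. exists alt. split; [exact Ha|].
    intros [i g] Hp. apply NNPP. intros Hnew.
    apply (proj2 (Hiff (mkN i g None))). simpl. auto.
  - destruct Hdia as (i & f & j & _ & _ & E'). discriminate.
Qed.

Lemma never_stopped_length n : (forall m, th m <> None) -> n <= length (pre th n).
Proof.
  intros Hrun. induction n as [|n IH]; [simpl; lia|].
  rewrite pre_succ, length_app. destruct (th n) as [L|] eqn:E; [|congruence].
  destruct L as [|x L]; [exfalso; exact (stage_nonempty n [] E eq_refl)|].
  simpl. lia.
Qed.

Lemma prec_fresh_stage i j : branch_prec th i j ->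
  exists m, th m <> None /\ nom_on (pre th m) i /\ ~ nom_on (pre th m) j.
Proof.
  intros (n & f & Hn). destruct (acc_stage _ _ _ _ Hn) as (m & Hm & (Hprem & _) & Hfresh).
  exists m. split; [congruence|]. split; [exact (nom_on_index _ _ _ (lf_nacc_in _ _ _ Hprem)) | exact Hfresh].
Qed.

Lemma chain_branch_infinite (s : nat -> nat) :
  (forall k, branch_prec th (s k) (s (S k))) -> branch_infinite th.
Proof.
  intros Hs.
  assert (Hlate : forall k, exists m, k <= m /\ th m <> None /\ ~ nom_on (pre th m) (s (S k))).
  { induction k as [|k (m & Hkm & _ & Hfresh)].
    - destruct (prec_fresh_stage _ _ (Hs 0)) as (m & Hm & _ & Hfresh). exists m. auto with arith.
    - destruct (prec_fresh_stage _ _ (Hs (S k))) as (m' & Hm' & Hon & Hfresh').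
      exists m'. split; [|auto].
      destruct (Nat.le_gt_cases m' m) as [Hle | Hlt]; [|lia].
      exfalso. exact (Hfresh (nom_on_incl _ _ _ (pre_mono th _ _ Hle) Hon)). }
  assert (Hrun : forall m, th m <> None).
  { intros m Hstop. destruct (Hlate m) as (m' & Hmm' & Hm' & _).
    exact (Hm' (stopped_forever m m' Hstop Hmm')). }
  intros N. exists N. exact (never_stopped_length N Hrun).
Qed.

End Branch.

Theorem lemma4 (i0 : nat) (f0 : form) (th : nat -> option (list node)) :
  IsBranch i0 f0 th ->
  (branch_infinite th <->
   exists seq : nat -> nat, forall k, branch_prec th (seq k) (seq (S k))).
Proof.
  intros HB. split.
  - exact (branch_infinite_chain i0 f0 th HB).
  - intros [s Hs]. exact (chain_branch_infinite i0 f0 th HB s Hs).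
Qed.
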